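(* Let $T$ be an anonymous and reasonable cardinal comparison test. If $T\not\sim\mathcal D$, then $T$ is not error-free. (In fact, if $T\not\sim_{\vec f}\mathcal D$ for a pair $\vec f$, then $T$ violates error-freeness.)
   Context: Let $\Omega=\{0,1\}$, $\Omega^\infty$ the set of infinite sequences $\omega=(\omega_1,\omega_2,\dots)$, and $\omega^t=(\omega_1,\dots,\omega_t)$ (also used for the cylinder set of all sequences with this prefix; $\omega^0=\emptyset$). $\mathcal G_t$ is the $\sigma$-algebra generated by the length-$t$ cylinders and $\mathcal G_\infty$ the $\sigma$-algebra generated by all cylinders. $\Delta(\Omega)$ is the set of probability distributions on $\Omega$; for $p\in\Delta(\Omega)$ and $x\in\Omega$, $p[x]$ is the probability of $x$. A forecasting strategy is a map $f:\bigcup_{t\ge0}(\Omega\times\Delta(\Omega)\times\Delta(\Omega))^t\to\Delta(\Omega)$; $F$ is the set of all forecasting strategies. Given an ordered pair $\vec f=(f,g)\in F\times F$ and $\omega\in\Omega^\infty$, the play path $(\omega,\vec f)$ is defined recursively: $(\omega,\vec f)^0=\emptyset$ and its $t$-th entry is $(\omega_t,f((\omega,\vec f)^{t-1}),g((\omega,\vec f)^{t-1}))$. The pair $\vec f$ induces two probability measures on $(\Omega^\infty,\mathcal G_\infty)$, again denoted $f$ and $g$, determined by $f(\omega^t)=\prod_{n=1}^t f((\omega,\vec f)^{n-1})[\omega_n]$ and $g(\omega^t)=\prod_{n=1}^t g((\omega,\vec f)^{n-1})[\omega_n]$. A (cardinal comparison) test is a sequence $T=(T_t)_{t>0}$ of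 $\mathcal G_t$-measurable functions $T_t:(\Omega\times\Delta(\Omega)\times\Delta(\Omega))^\infty\to[0,1]$; write $T_t(\omega,\vec f)=T_t((\omega,\vec f))$ and $T(\omega,\vec f)=\lim_t T_t(\omega,\vec f)$ whenever the limit exists. For $\epsilon\in(0,1)$ let $L^{\vec f}_{T,\epsilon}=\{\omega:T(\omega,\vec f)\text{ exists and }>\epsilon\}$ and $R^{\vec f}_{T,\epsilon}=\{\omega:T(\omega,\vec f)\text{ exists and }<\epsilon\}$. $T$ is anonymous if $T_t(\omega,f,g)=1-T_t(\omega,g,f)$ for all $\omega$, $t>0$, $f,g\in F$. $T$ is error-free if for all $\vec f=(f,g)$ and measurable $A\subseteq\Omega^\infty$: for all $\epsilon\in(0,\frac12)$, $f(A\cap R^{\vec f}_{T,\epsilon})\le\frac{\epsilon}{1-\epsilon}g(A\cap R^{\vec f}_{T,\epsilon})$, and for all $\epsilon\in(\frac12,1)$, $g(A\cap L^{\vec f}_{T,\epsilon})\le\frac{1-\epsilon}{\epsilon}f(A\cap L^{\vec f}_{T,\epsilon})$. $T$ is reasonable if for all $\vec f=(f,g)$ and measurable $A$: for $\epsilon\in(0,\frac12)$, if $g(A)>0$ and $f(A)<\frac{\epsilon}{1-\epsilon}g(A)$ then $g(A\cap R^{\vec f}_{T,\epsilon})>0$; and for $\epsilon\in(\frac12,1)$, if $f(A)>0$ and $g(A)<\frac{1-\epsilon}{\epsilon}f(A)$ then $f(A\cap L^{\vec f}_{T,\epsilon})>0$. The finite derivative test $\mathcal D$: for $t\ge0$,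 $\mathcal D_{t+1}(\omega,\vec f)=\frac{f(\omega^t)}{f(\omega^t)+g(\omega^t)}$ if $f(\omega^t)>0$ or $g(\omega^t)>0$, and $\frac12$ otherwise. Equivalence: $T\sim_{\vec f}\hat T$ if $f(N)=g(N)=0$ where $N=\{\omega: T(\omega,\vec f),\hat T(\omega,\vec f)\text{ both exist and differ}\}$; $T\sim\hat T$ if $T\sim_{\vec f}\hat T$ for all $\vec f\in F\times F$. *)

From Stdlib Require Import Reals Lra List ClassicalEpsilon.
Import ListNotations.
Open Scope R_scope.

(* Omega = {0,1} is bool (true = 1).  Infinite outcome sequences are
   nat -> bool with omega_{n+1} = w n. *)
Definition Seq := nat -> bool.

(* Delta(Omega): a distribution on {0,1}, given by the probability of 1. *)
Definition Dist := { p : R | 0 <= p <= 1 }.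
Definition prob (p : Dist) (x : bool) : R :=
  if x then proj1_sig p else 1 - proj1_sig p.

(* An entry of a play path: (omega_t, forecast of f, forecast of g). *)
Definition Entry := (bool * Dist * Dist)%type.
Definition History := list Entry.

Definition Strategy := History -> Dist.

Fixpoint play (f g : Strategy) (w : Seq) (t : nat) : History :=
  match t with
  | O => []
  | S n => let h := play f g w n in h ++ [(w n, f h, g h)]
  end.

(* Probability product along a history, using the forecasts of the first
   (sel = true) or second (sel = false) forecaster. *)
Definition wprod (sel : bool) (h : History) : R :=
  fold_right (fun e acc =>
    prob (if sel then snd (fst e) else snd e) (fst (fst e)) * acc) 1 h.

Definition in_cyl (w : Seq) (t : nat) (w' : Seq) : Prop :=
  forall n, (n < t)%nat -> w' n = w n.

(* Measure of the cylinder w^t under the measure induced by f (sel=true)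
   or g (sel=false) of the pair (f,g). *)
Definition cyl_weight (sel : bool) (f g : Strategy) (w : Seq) (t : nat) : R :=
  wprod sel (play f g w t).

Inductive measurable : (Seq -> Prop) -> Prop :=
  | meas_cyl : forall w t, measurable (in_cyl w t)
  | meas_compl : forall A, measurable A -> measurable (fun x => ~ A x)
  | meas_union : forall (A : nat -> Seq -> Prop),
      (forall k, measurable (A k)) -> measurable (fun x => exists k, A k x)
  | meas_ext : forall A B, (forall x, A x <-> B x) -> measurable A -> measurable B.

(* Countable cylinder covers (None = empty piece). *)
Definition piece_weight (sel : bool) (f g : Strategy)
  (c : option (Seq * nat)) : R :=
  match c with None => 0 | Some (w, t) => cyl_weight sel f g w t end.

Definition in_piece (c : option (Seq * nat)) (x : Seq) : Prop :=
  match c with None => False | Some (w, t) => in_cyl w t x end.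

Definition cover_sums (sel : bool) (f g : Strategy) (A : Seq -> Prop) (s : R)
  : Prop :=
  exists c : nat -> option (Seq * nat),
    (forall x, A x -> exists k, in_piece (c k) x) /\
    infinite_sum (fun k => piece_weight sel f g (c k)) s.

Definition is_glb (E : R -> Prop) (m : R) : Prop :=
  (forall x, E x -> m <= x) /\ (forall b, (forall x, E x -> b <= x) -> b <= m).

(* The measure induced by (f,g) (first or second forecaster), obtained by the
   Caratheodory (outer measure) extension of the cylinder weights; on
   measurable sets this is the unique measure determined by the cylinder
   probabilities. *)
Definition meas (sel : bool) (f g : Strategy) (A : Seq -> Prop) : R :=
  epsilon (inhabits 0) (fun m => is_glb (cover_sums sel f g A) m).

(* Cardinal comparison tests: T t h is T_t evaluated on a play path whose
   length-t prefix is h (G_t-measurability = dependence on the length-t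
   prefix only). *)
Definition Test := nat -> History -> R.

Definition is_test (T : Test) : Prop :=
  forall t h, (0 < t)%nat -> 0 <= T t h <= 1.

Definition Tval (T : Test) (f g : Strategy) (w : Seq) (t : nat) : R :=
  T t (play f g w t).

Definition has_lim (T : Test) (f g : Strategy) (w : Seq) (l : R) : Prop :=
  Un_cv (fun t => Tval T f g w t) l.

Definition Lset (T : Test) (f g : Strategy) (eps : R) (w : Seq) : Prop :=
  exists l, has_lim T f g w l /\ l > eps.
Definition Rset (T : Test) (f g : Strategy) (eps : R) (w : Seq) : Prop :=
  exists l, has_lim T f g w l /\ l < eps.

Definition anonymous (T : Test) : Prop :=
  forall (w : Seq) (t : nat) (f g : Strategy), (0 < t)%nat ->
    Tval T f g w t = 1 - Tval T g f w t.

Definition error_free (T : Test) : Prop :=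
  forall (f g : Strategy) (A : Seq -> Prop), measurable A ->
    (forall eps, 0 < eps < 1/2 ->
       meas true f g (fun x => A x /\ Rset T f g eps x)
       <= eps / (1 - eps) * meas false f g (fun x => A x /\ Rset T f g eps x)) /\
    (forall eps, 1/2 < eps < 1 ->
       meas false f g (fun x => A x /\ Lset T f g eps x)
       <= (1 - eps) / eps * meas true f g (fun x => A x /\ Lset T f g eps x)).

Definition reasonable (T : Test) : Prop :=
  forall (f g : Strategy) (A : Seq -> Prop), measurable A ->
    (forall eps, 0 < eps < 1/2 ->
       meas false f g A > 0 ->
       meas true f g A < eps / (1 - eps) * meas false f g A ->
       meas false f g (fun x => A x /\ Rset T f g eps x) > 0) /\
    (forall eps, 1/2 < eps < 1 ->
       meas true f g A > 0 ->
       meas false f g A < (1 - eps) / eps * meas true f g A ->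
       meas true f g (fun x => A x /\ Lset T f g eps x) > 0).

(* The finite derivative test D: D_{t+1} = f(omega^t)/(f(omega^t)+g(omega^t)),
   where f(omega^t), g(omega^t) are computed from the first t entries of the
   play path. *)
Definition Dtest : Test := fun t h =>
  match t with
  | O => 1/2
  | S n =>
      let pf := wprod true (firstn n h) in
      let pg := wprod false (firstn n h) in
      if Rlt_dec 0 pf then pf / (pf + pg)
      else if Rlt_dec 0 pg then pf / (pf + pg) else 1/2
  end.

Definition equiv_pair (T T' : Test) (f g : Strategy) : Prop :=
  let N := fun w => exists l l', has_lim T f g w l /\ has_lim T' f g w l' /\ l <> l' in
  meas true f g N = 0 /\ meas false f g N = 0.

Definition equiv (T T' : Test) : Prop :=
  forall f g : Strategy, equiv_pair T T' f g.

From Pilot Require Import Defs.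
From Stdlib Require Import Reals Lra Lia List ClassicalEpsilon Classical.
Import ListNotations.
Open Scope R_scope.

(** We prove the contrapositive, pair by pair: if [T] is a reasonable and
    error-free test, then for every pair [(f, g)] the limits of [T] and of the
    finite derivative test [D] coincide wherever both exist, up to a set that
    is null for both induced measures.

    The disagreement set is a countable union, over grid intervals [a < b], of
    sets on which one limit lies below [a] and the other above [b].  On such a
    set an eventual bound on [D] is an eventual domination between the
    cylinder weights [f(x^m)] and [g(x^m)], which transfers to the measures
    ([meas_compare]); error-freeness, or reasonableness used contrapositively,
    gives the opposite bound on the odds, so both measures vanish
    ([null_of_squeeze]). *)

(** Two sequences agree up to time [t].  Note that [in_cyl v t x] is
    literally [agree t x v]. *)
Definition agree (t : nat) (u v : Seq) : Prop := forall n, (n < t)%nat -> u n = v n.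

Lemma agree_sym t u v : agree t u v -> agree t v u.
Proof. intros H n Hn; symmetry; auto. Qed.

Lemma agree_le t t' u v : (t' <= t)%nat -> agree t u v -> agree t' u v.
Proof. intros Hle H n Hn; apply H; lia. Qed.

Lemma prob_range p x : 0 <= prob p x <= 1.
Proof. destruct p as [q Hq], x; simpl; lra. Qed.

Lemma prob_sum p : prob p false + prob p true = 1.
Proof. destruct p as [q Hq]; simpl; lra. Qed.

Section CylinderWeights.
Variables (f g : Strategy).

Lemma play_length w t : length (play f g w t) = t.
Proof. induction t; simpl; auto. rewrite length_app, IHt; simpl; lia. Qed.

Lemma play_agree w w' t : agree t w w' -> play f g w t = play f g w' t.
Proof.
  induction t as [|t IH]; intros H; simpl; auto.
  rewrite IH by (apply (agree_le (S t)); auto). rewrite (H t) by lia. reflexivity.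
Qed.

Lemma wprod_nonneg s h : 0 <= wprod s h.
Proof. induction h; simpl; [lra|]. apply Rmult_le_pos; auto. apply prob_range. Qed.

Lemma cw_nonneg s w t : 0 <= cyl_weight s f g w t.
Proof. apply wprod_nonneg. Qed.

Lemma cw_agree s w w' t : agree t w w' -> cyl_weight s f g w t = cyl_weight s f g w' t.
Proof. intros H; unfold cyl_weight; rewrite (play_agree w w' t H); auto. Qed.

Lemma wprod_snoc s h e :
  wprod s (h ++ [e]) = wprod s h * prob (if s then snd (fst e) else snd e) (fst (fst e)).
Proof. induction h as [|e' h IH]; simpl; [ring|]. rewrite IH; ring. Qed.

Lemma cw_S s w t : cyl_weight s f g w (S t) =
  cyl_weight s f g w t * prob (if s then f (play f g w t) else g (play f g w t)) (w t).
Proof. unfold cyl_weight; simpl play. rewrite wprod_snoc. destruct s; reflexivity. Qed.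

End CylinderWeights.

Definition sumL {A : Type} (l : list A) (F : A -> R) : R :=
  fold_right (fun u acc => F u + acc) 0 l.

Section FiniteSums.
Variable A : Type.
Implicit Types (l : list A) (F G : A -> R).

Lemma sumL_ext_in l F G : (forall u, In u l -> F u = G u) -> sumL l F = sumL l G.
Proof.
  induction l as [|a l IH]; intros H; simpl; auto.
  rewrite H, IH; simpl; auto. intros; apply H; simpl; auto.
Qed.

Lemma sumL_ext l F G : (forall u, F u = G u) -> sumL l F = sumL l G.
Proof. intros H; apply sumL_ext_in; auto. Qed.

Lemma sumL_le_in l F G : (forall u, In u l -> F u <= G u) -> sumL l F <= sumL l G.
Proof.
  induction l as [|a l IH]; intros H; simpl; [lra|].
  assert (F a <= G a) by (apply H; simpl; auto).
  assert (sumL l F <= sumL l G) by (apply IH; intros; apply H; simpl; auto). lra.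
Qed.

Lemma sumL_le l F G : (forall u, F u <= G u) -> sumL l F <= sumL l G.
Proof. intros H; apply sumL_le_in; auto. Qed.

Lemma sumL_nonneg l F : (forall u, 0 <= F u) -> 0 <= sumL l F.
Proof.
  intros H. replace 0 with (sumL l (fun _ => 0)) at 1 by (induction l; simpl; lra).
  apply sumL_le; auto.
Qed.

Lemma sumL_plus l F G : sumL l (fun u => F u + G u) = sumL l F + sumL l G.
Proof. induction l as [|a l IH]; simpl; [ring|]. rewrite IH; ring. Qed.

Lemma sumL_scal l F c : sumL l (fun u => c * F u) = c * sumL l F.
Proof. induction l as [|a l IH]; simpl; [ring|]. rewrite IH; ring. Qed.

Lemma sumL_app l l' F : sumL (l ++ l') F = sumL l F + sumL l' F.
Proof. induction l as [|a l IH]; simpl; [ring|]. rewrite IH; ring. Qed.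

Lemma sumL_flat_map {B : Type} (h : B -> list A) (l : list B) F :
  sumL (flat_map h l) F = sumL l (fun b => sumL (h b) F).
Proof. induction l as [|b l IH]; simpl; auto. rewrite sumL_app, IH; auto. Qed.

End FiniteSums.

Definition fsum (F : nat -> R) (N : nat) : R := sumL (seq 0 N) F.

Lemma fsum_S F N : fsum F (S N) = fsum F N + F N.
Proof. unfold fsum. rewrite seq_S, sumL_app. simpl. ring. Qed.

Lemma fsum_ext F G N : (forall n, (n < N)%nat -> F n = G n) -> fsum F N = fsum G N.
Proof. intros H. apply sumL_ext_in. intros n Hn%in_seq. apply H; lia. Qed.

Lemma fsum_le F G N : (forall n, (n < N)%nat -> F n <= G n) -> fsum F N <= fsum G N.
Proof. intros H. apply sumL_le_in. intros n Hn%in_seq. apply H; lia. Qed.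

Lemma fsum_mono F N M : (forall n, 0 <= F n) -> (N <= M)%nat -> fsum F N <= fsum F M.
Proof. intros H Hle; induction Hle; [lra|]. rewrite fsum_S. specialize (H m); lra. Qed.

Lemma sum_f_R0_fsum F N : sum_f_R0 F N = fsum F (S N).
Proof.
  induction N as [|N IH]; [unfold fsum; simpl; ring|].
  rewrite fsum_S, <- IH. reflexivity.
Qed.

(** * Words of length [L] and the finite-level measures *)

(** [upd u L b] changes the outcome at time [L] to [b]; [words L] lists one
    representative of every cylinder of length [L]. *)
Definition upd (u : Seq) (L : nat) (b : bool) : Seq :=
  fun n => if Nat.eqb n L then b else u n.

Fixpoint words (L : nat) : list Seq :=
  match L with
  | O => [fun _ => false]
  | S L' => flat_map (fun u => [upd u L' false; upd u L' true]) (words L')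
  end.

Lemma upd_agree u L b : agree L (upd u L b) u.
Proof. intros n Hn; unfold upd. destruct (Nat.eqb_spec n L); [lia|auto]. Qed.

Lemma in_cyl_upd v t u b : in_cyl v (S t) (upd u t b) <-> b = v t /\ in_cyl v t u.
Proof.
  unfold in_cyl, upd. split.
  - intros H. split.
    + specialize (H t (Nat.lt_succ_diag_r t)). rewrite Nat.eqb_refl in H; auto.
    + intros n Hn. specialize (H n ltac:(lia)). destruct (Nat.eqb_spec n t); [lia|auto].
  - intros [-> H] n Hn. destruct (Nat.eqb_spec n t); [subst; auto|apply H; lia].
Qed.

Definition ind (P : Seq -> Prop) (u : Seq) : R :=
  if excluded_middle_informative (P u) then 1 else 0.

Lemma ind_range P u : 0 <= ind P u <= 1.
Proof. unfold ind; destruct (excluded_middle_informative _); lra. Qed.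

Lemma ind_true (P : Seq -> Prop) u : P u -> ind P u = 1.
Proof. unfold ind; destruct (excluded_middle_informative _); tauto. Qed.

Lemma ind_false (P : Seq -> Prop) u : ~ P u -> ind P u = 0.
Proof. unfold ind; destruct (excluded_middle_informative _); tauto. Qed.

Lemma ind_iff (P Q : Seq -> Prop) u u' : (P u <-> Q u') -> ind P u = ind Q u'.
Proof.
  intros H; unfold ind.
  destruct (excluded_middle_informative (P u)), (excluded_middle_informative (Q u')); tauto.
Qed.

Definition determined_by (t : nat) (P : Seq -> Prop) : Prop :=
  forall u u', agree t u u' -> P u -> P u'.

Lemma count_cyl t v (G : Seq -> R) :
  (forall u u', agree t u u' -> G u = G u') ->
  sumL (words t) (fun u => ind (in_cyl v t) u * G u) = G v.
Proof.
  revert v G; induction t as [|t IH]; intros v G HG; simpl words.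
  - simpl. rewrite ind_true by (intros n Hn; lia).
    rewrite (HG _ v) by (intros n Hn; lia). ring.
  - rewrite sumL_flat_map.
    rewrite (sumL_ext _ _ _ (fun u => ind (in_cyl v t) u * G (upd u t (v t)))).
    + rewrite IH.
      * apply HG. intros n Hn. unfold upd. destruct (Nat.eqb_spec n t); subst; auto.
      * intros u u' Hu. apply HG. intros n Hn. unfold upd.
        destruct (Nat.eqb_spec n t); auto. apply Hu; lia.
    + intros u. simpl.
      assert (Hcyl : forall b, ind (in_cyl v (S t)) (upd u t b)
                      = if Bool.eqb b (v t) then ind (in_cyl v t) u else 0).
      { intros b. destruct (Bool.eqb_spec b (v t)) as [Eb|Eb].
        - apply ind_iff. rewrite in_cyl_upd. tauto.
        - apply ind_false. rewrite in_cyl_upd. tauto. }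
      rewrite !Hcyl. destruct (v t); simpl; ring.
Qed.

Section FiniteLevel.
Variables (s : bool) (f g : Strategy).

(** [mu L P]: the weight of the length-[L] cylinders whose representative lies
    in [P]; on sets determined by the first [L] outcomes this is the measure. *)
Definition mu (L : nat) (P : Seq -> Prop) : R :=
  sumL (words L) (fun u => ind P u * cyl_weight s f g u L).

Lemma mu_step L P : determined_by L P -> mu (S L) P = mu L P.
Proof.
  intros HP. unfold mu. simpl words. rewrite sumL_flat_map. apply sumL_ext. intros u.
  assert (Hind : forall b, ind P (upd u L b) = ind P u).
  { intros b. apply ind_iff. split; apply HP; [|apply agree_sym]; apply upd_agree. }
  assert (Hw : forall b, cyl_weight s f g (upd u L b) (S L) =
     cyl_weight s f g u L * prob (if s then f (play f g u L) else g (play f g u L)) b).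
  { intros b. rewrite cw_S, (play_agree f g _ u) by apply upd_agree.
    rewrite (cw_agree f g s _ u) by apply upd_agree.
    unfold upd at 1. rewrite Nat.eqb_refl. reflexivity. }
  simpl. rewrite !Hind, !Hw.
  pose proof (prob_sum (if s then f (play f g u L) else g (play f g u L))) as Hsum.
  transitivity (ind P u * cyl_weight s f g u L *
    (prob (if s then f (play f g u L) else g (play f g u L)) false +
     prob (if s then f (play f g u L) else g (play f g u L)) true)); [ring|].
  rewrite Hsum; ring.
Qed.

Lemma mu_cyl v t L : (t <= L)%nat -> mu L (in_cyl v t) = cyl_weight s f g v t.
Proof.
  intros Hle. replace L with (t + (L - t))%nat by lia.
  induction (L - t)%nat as [|k IH].
  - rewrite Nat.add_0_r. apply count_cyl. intros; apply cw_agree; auto.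
  - rewrite Nat.add_succ_r, mu_step; auto.
    intros u u' H Hu n Hn. rewrite <- H by lia. auto.
Qed.

Lemma mu_mono L (P Q : Seq -> Prop) : (forall u, P u -> Q u) -> mu L P <= mu L Q.
Proof.
  intros H. apply sumL_le. intros u. apply Rmult_le_compat_r; [apply cw_nonneg|].
  destruct (classic (P u)) as [Hp|Hp].
  - rewrite !ind_true; auto; lra.
  - rewrite (ind_false P) by auto. apply ind_range.
Qed.

Lemma mu_empty L (P : Seq -> Prop) : (forall u, ~ P u) -> mu L P = 0.
Proof.
  intros H. unfold mu. rewrite (sumL_ext _ _ _ (fun u => 0 * 0)).
  - rewrite sumL_scal; ring.
  - intros u. rewrite ind_false; auto; ring.
Qed.

Lemma mu_union_le L (P Q : Seq -> Prop) :
  mu L (fun u => P u \/ Q u) <= mu L P + mu L Q.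
Proof.
  unfold mu. rewrite <- sumL_plus. apply sumL_le. intros u.
  pose proof (cw_nonneg f g s u L).
  unfold ind. destruct (excluded_middle_informative (P u)), (excluded_middle_informative (Q u)),
    (excluded_middle_informative (P u \/ Q u)); try lra. tauto.
Qed.

Lemma mu_union_disj L (P Q : Seq -> Prop) : (forall u, P u -> Q u -> False) ->
  mu L (fun u => P u \/ Q u) = mu L P + mu L Q.
Proof.
  intros Hd. unfold mu. rewrite <- sumL_plus. apply sumL_ext. intros u.
  unfold ind. destruct (excluded_middle_informative (P u)), (excluded_middle_informative (Q u)),
    (excluded_middle_informative (P u \/ Q u)); try lra; exfalso; eauto; tauto.
Qed.

End FiniteLevel.

Definition piece_len (c : option (Seq * nat)) : nat :=
  match c with None => O | Some (_, t) => t end.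

Lemma le_list_max k l : In k l -> (k <= list_max l)%nat.
Proof.
  intros Hk. pose proof (proj1 (list_max_le l (list_max l)) (le_n _)) as H.
  rewrite Forall_forall in H; auto.
Qed.

Definition in_pieces (c : nat -> option (Seq * nat)) (N : nat) (x : Seq) : Prop :=
  exists n, (n < N)%nat /\ in_piece (c n) x.

Definition in_list (Cs : list (Seq * nat)) (x : Seq) : Prop :=
  exists C, In C Cs /\ in_cyl (fst C) (snd C) x.

Definition disjoint_upto (c : nat -> option (Seq * nat)) (N : nat) : Prop :=
  forall n n' x, (n < N)%nat -> (n' < N)%nat -> n <> n' ->
    in_piece (c n) x -> in_piece (c n') x -> False.

Lemma mu_pieces s f g L c N : disjoint_upto c N ->
  mu s f g L (in_pieces c N) = fsum (fun n => mu s f g L (in_piece (c n))) N.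
Proof.
  induction N as [|N IH]; intros Hd.
  - apply mu_empty. intros u [n [Hn _]]; lia.
  - rewrite fsum_S, <- IH by (intros n n' x ? ?; apply Hd; lia).
    rewrite <- mu_union_disj.
    + apply Rle_antisym; apply mu_mono; intros u.
      * intros [n [Hn Hp]]. destruct (Nat.eq_dec n N); subst; [right|left]; auto.
        exists n; split; auto; lia.
      * intros [[n [Hn Hp]]|Hp]; [exists n|exists N]; split; auto; lia.
    + intros u [n [Hn Hp]] Hq. apply (Hd n N u); auto; lia.
Qed.

Lemma mu_list_le s f g L Cs :
  mu s f g L (in_list Cs) <= sumL Cs (fun C => mu s f g L (in_cyl (fst C) (snd C))).
Proof.
  induction Cs as [|C0 Cs IH]; simpl.
  - rewrite mu_empty; [lra|]. intros u [C [[] _]].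
  - eapply Rle_trans; [|apply Rplus_le_compat_l, IH].
    eapply Rle_trans; [|apply mu_union_le].
    apply mu_mono. intros u [C [[HC|HC] Hu]]; [left; subst; auto|right; exists C; auto].
Qed.

(** Both sides are evaluated at a common level. *)
Lemma disjoint_pieces_le s f g (c : nat -> option (Seq * nat)) N Cs :
  disjoint_upto c N ->
  (forall n v m, (n < N)%nat -> c n = Some (v, m) ->
     exists C, In C Cs /\ forall x, in_cyl v m x -> in_cyl (fst C) (snd C) x) ->
  fsum (fun n => piece_weight s f g (c n)) N <= sumL Cs (fun C => cyl_weight s f g (fst C) (snd C)).
Proof.
  intros Hd Hin.
  set (L := Nat.max (list_max (map (fun n => piece_len (c n)) (seq 0 N))) (list_max (map snd Cs))).
  rewrite (fsum_ext _ (fun n => mu s f g L (in_piece (c n)))).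
  - rewrite <- mu_pieces by auto.
    rewrite (sumL_ext_in _ _ _ (fun C => mu s f g L (in_cyl (fst C) (snd C)))).
    + eapply Rle_trans; [|apply mu_list_le]. apply mu_mono.
      intros u [n [Hn Hp]]. destruct (c n) as [[v m]|] eqn:E; [|destruct Hp].
      destruct (Hin n v m Hn E) as [C [HC HC']]. exists C; split; auto.
    + intros C HC. symmetry. apply mu_cyl.
      assert (snd C <= list_max (map snd Cs))%nat by (apply le_list_max, in_map; auto).
      unfold L; lia.
  - intros n Hn. destruct (c n) as [[v m]|] eqn:E; simpl.
    + symmetry; apply mu_cyl.
      assert (piece_len (c n) <= list_max (map (fun n => piece_len (c n)) (seq 0 N)))%nat
        by (apply le_list_max, (in_map (fun k => piece_len (c k))), in_seq; lia).
      rewrite E in H; unfold L; simpl in H; lia.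
    + symmetry; apply mu_empty; auto.
Qed.

(** * Minimal good prefixes *)

(** Every finite prefix is coded by a positive integer: [decode n] reads the
    bits of [n] below its leading bit [Nat.log2 n]. *)
Definition decode (n : nat) : Seq := fun i => Nat.testbit n i.

Lemma code_exists m (w : Seq) : exists n, n <> O /\ Nat.log2 n = m /\
  forall i, (i < m)%nat -> Nat.testbit n i = w i.
Proof.
  revert w; induction m as [|m IH]; intros w.
  - exists 1%nat; repeat split; auto. intros; lia.
  - destruct (IH (fun i => w (S i))) as [n [Hn0 [Hl Hb]]].
    destruct (w O) eqn:E.
    + exists (2 * n + 1)%nat. repeat split; [lia|rewrite Nat.log2_succ_double by lia; auto|].
      intros [|i] Hi; [rewrite Nat.testbit_odd_0; auto|].
      rewrite Nat.testbit_odd_succ by lia. apply Hb; lia.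
    + exists (2 * n)%nat. repeat split; [lia|rewrite Nat.log2_double by lia; auto|].
      intros [|i] Hi; [rewrite Nat.testbit_even_0; auto|].
      rewrite Nat.testbit_even_succ by lia. apply Hb; lia.
Qed.

Lemma code_unique n n' : n <> O -> n' <> O -> Nat.log2 n = Nat.log2 n' ->
  (forall i, (i < Nat.log2 n)%nat -> Nat.testbit n i = Nat.testbit n' i) -> n = n'.
Proof.
  intros H0 H0' Hl Hb. apply Nat.bits_inj. intros i.
  destruct (Nat.lt_trichotomy i (Nat.log2 n)) as [Hi|[Hi|Hi]]; auto.
  - subst. rewrite Nat.bit_log2 by auto. rewrite Hl, Nat.bit_log2; auto.
  - rewrite !Nat.bits_above_log2; auto. lia.
Qed.

(** [G x m] reads "the length-[m] prefix of [x] is good"; it must only depend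
    on that prefix. *)
Definition prefix_determined (G : Seq -> nat -> Prop) : Prop :=
  forall m, determined_by m (fun x => G x m).

Section MinimalPrefixes.
Variable G : Seq -> nat -> Prop.
Hypothesis HG : prefix_determined G.

Definition minimal_code (n : nat) : Prop :=
  n <> O /\ G (decode n) (Nat.log2 n) /\ forall k, (k < Nat.log2 n)%nat -> ~ G (decode n) k.

Definition minimal_piece (n : nat) : option (Seq * nat) :=
  if excluded_middle_informative (minimal_code n) then Some (decode n, Nat.log2 n) else None.

Lemma least_witness (P : nat -> Prop) : (exists m, P m) ->
  exists m, P m /\ forall k, (k < m)%nat -> ~ P k.
Proof.
  intros [m Hm]. induction m as [m IH] using (well_founded_induction Wf_nat.lt_wf).
  destruct (classic (exists k, (k < m)%nat /\ P k)) as [[k [Hk Pk]]|Hn].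
  - exact (IH k Hk Pk).
  - exists m; split; auto. intros k Hk Pk; apply Hn; eauto.
Qed.

Lemma minimal_piece_some n v m : minimal_piece n = Some (v, m) ->
  minimal_code n /\ v = decode n /\ m = Nat.log2 n.
Proof.
  unfold minimal_piece. destruct (excluded_middle_informative (minimal_code n));
    intros H; inversion H; auto.
Qed.

Lemma minimal_piece_cover w : (exists m, G w m) -> exists n, in_piece (minimal_piece n) w.
Proof.
  intros Hex. destruct (least_witness _ Hex) as [m [Hm Hmin]].
  destruct (code_exists m w) as [n [Hn0 [Hl Hb]]].
  exists n. unfold minimal_piece.
  destruct (excluded_middle_informative (minimal_code n)) as [Hs|Hs].
  - simpl. rewrite Hl. intros i Hi. symmetry. apply Hb; auto.
  - exfalso. apply Hs. split; auto. rewrite Hl. split.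
    + eapply HG; [|apply Hm]. intros i Hi. unfold decode. symmetry; auto.
    + intros k Hk HGk. apply (Hmin k Hk). eapply HG; [|apply HGk].
      intros i Hi. unfold decode. apply Hb; lia.
Qed.

Lemma minimal_piece_good n v m : minimal_piece n = Some (v, m) -> forall x, in_cyl v m x -> G x m.
Proof.
  intros H x Hx. apply minimal_piece_some in H as [[_ [Hs _]] [-> ->]].
  eapply HG; [|apply Hs]. apply agree_sym; exact Hx.
Qed.

Lemma minimal_piece_disjoint N : disjoint_upto minimal_piece N.
Proof.
  intros n n' x _ _ Hne H1 H2.
  destruct (minimal_piece n) as [[v m]|] eqn:E1; [|destruct H1].
  destruct (minimal_piece n') as [[v' m']|] eqn:E2; [|destruct H2].
  simpl in H1, H2.
  apply minimal_piece_some in E1 as [[Hn0 [Hs Hmin]] [-> ->]].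
  apply minimal_piece_some in E2 as [[Hn0' [Hs' Hmin']] [-> ->]].
  assert (Gx : forall k nn, (k <= Nat.log2 nn)%nat -> in_cyl (decode nn) (Nat.log2 nn) x ->
     (G (decode nn) k <-> G x k)).
  { intros k nn Hk Hc; split; intros; (eapply HG; [|eauto]); intros i Hi;
      [symmetry|]; apply Hc; lia. }
  assert (Hlen : Nat.log2 n = Nat.log2 n').
  { destruct (Nat.lt_trichotomy (Nat.log2 n) (Nat.log2 n')) as [Hlt|[Heq|Hlt]]; auto; exfalso.
    - apply (Hmin' _ Hlt), (Gx (Nat.log2 n) n' ltac:(lia) H2).
      apply (Gx (Nat.log2 n) n ltac:(lia) H1); auto.
    - apply (Hmin _ Hlt), (Gx (Nat.log2 n') n ltac:(lia) H1).
      apply (Gx (Nat.log2 n') n' ltac:(lia) H2); auto. }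
  apply Hne, code_unique; auto. intros i Hi.
  specialize (H1 i Hi). rewrite Hlen in Hi. specialize (H2 i Hi). unfold decode in *. congruence.
Qed.

End MinimalPrefixes.

Lemma lim_le_ev u l M N : Un_cv u l -> (forall n, (N <= n)%nat -> u n <= M) -> l <= M.
Proof.
  intros Hc Hb. apply Rnot_lt_le. intros Hlt.
  destruct (Hc (l - M)) as [K HK]; [lra|].
  specialize (HK (Nat.max N K) ltac:(lia)). specialize (Hb (Nat.max N K) ltac:(lia)).
  unfold Rdist in HK. apply Rabs_def2 in HK. lra.
Qed.

Lemma lim_ge_ev u l M N : Un_cv u l -> (forall n, (N <= n)%nat -> M <= u n) -> M <= l.
Proof.
  intros Hc Hb. apply Rnot_lt_le. intros Hlt.
  destruct (Hc (M - l)) as [K HK]; [lra|].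
  specialize (HK (Nat.max N K) ltac:(lia)). specialize (Hb (Nat.max N K) ltac:(lia)).
  unfold Rdist in HK. apply Rabs_def2 in HK. lra.
Qed.

Lemma infinite_sum_partial a S : (forall n, 0 <= a n) -> infinite_sum a S ->
  forall N, fsum a N <= S.
Proof.
  intros Ha Hs N. apply (lim_ge_ev _ _ _ N Hs). intros n Hn.
  rewrite sum_f_R0_fsum. apply fsum_mono; auto; lia.
Qed.

Lemma series_bounded a M : (forall n, 0 <= a n) -> (forall N, fsum a N <= M) ->
  exists S, infinite_sum a S /\ S <= M.
Proof.
  intros Ha Hb. destruct (growing_cv (sum_f_R0 a)) as [l Hl].
  - intros n. simpl. specialize (Ha (S n)). lra.
  - exists M. intros x [n ->]. rewrite sum_f_R0_fsum; auto.
  - exists l; split; auto. apply (lim_le_ev _ _ _ O Hl). intros n _; rewrite sum_f_R0_fsum; auto.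
Qed.

Lemma infinite_sum_const_partials a S : (forall n, sum_f_R0 a n = S) -> infinite_sum a S.
Proof.
  intros H e He. exists O. intros n _. rewrite H. unfold Rdist.
  rewrite Rminus_diag, Rabs_R0; lra.
Qed.

(** * The outer measure [meas] *)

Section OuterMeasure.
Variables (s : bool) (f g : Strategy).

Lemma piece_weight_nonneg c : 0 <= piece_weight s f g c.
Proof. destruct c as [[v t]|]; simpl; [apply cw_nonneg|lra]. Qed.

Lemma cover_nonneg A S : cover_sums s f g A S -> 0 <= S.
Proof.
  intros [c [_ Hs]].
  pose proof (infinite_sum_partial _ _ (fun n => piece_weight_nonneg (c n)) Hs O) as H.
  unfold fsum in H; simpl in H; lra.
Qed.

(** The whole space is covered by the cylinder of the empty prefix. *)
Lemma cover_exists A : exists S, cover_sums s f g A S.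
Proof.
  exists 1, (fun k => match k with O => Some ((fun _ => false), O) | S _ => None end).
  split.
  - intros x _. exists O. simpl. intros n Hn; lia.
  - apply infinite_sum_const_partials.
    induction n as [|n IH]; simpl in *; [unfold cyl_weight; simpl; ring|]. rewrite IH; ring.
Qed.

Lemma meas_spec A : is_glb (cover_sums s f g A) (meas s f g A).
Proof.
  unfold meas. apply epsilon_spec.
  destruct (completeness (fun y => cover_sums s f g A (- y))) as [m [Hub Hlub]].
  - exists 0. intros y Hy. apply cover_nonneg in Hy. lra.
  - destruct (cover_exists A) as [S HS]. exists (- S). rewrite Ropp_involutive; auto.
  - exists (- m). split.
    + intros x Hx. assert (- x <= m) by (apply Hub; rewrite Ropp_involutive; auto). lra.
    + intros b Hb. assert (m <= - b) by (apply Hlub; intros y Hy; specialize (Hb _ Hy); lra). lra.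
Qed.

Lemma meas_le_cover A S : cover_sums s f g A S -> meas s f g A <= S.
Proof. apply (proj1 (meas_spec A)). Qed.

Lemma meas_ge_lb A b : (forall S, cover_sums s f g A S -> b <= S) -> b <= meas s f g A.
Proof. apply (proj2 (meas_spec A)). Qed.

Lemma meas_nonneg A : 0 <= meas s f g A.
Proof. apply meas_ge_lb. intros; eapply cover_nonneg; eauto. Qed.

Lemma meas_mono (A B : Seq -> Prop) : (forall x, A x -> B x) -> meas s f g A <= meas s f g B.
Proof.
  intros H. apply meas_ge_lb. intros S [c [Hc Hs]]. apply meas_le_cover. exists c; split; auto.
Qed.

Lemma meas_empty (A : Seq -> Prop) : (forall x, ~ A x) -> meas s f g A = 0.
Proof.
  intros H. apply Rle_antisym; [|apply meas_nonneg]. apply meas_le_cover.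
  exists (fun _ => None). split; [intros x Hx; exfalso; eapply H; eauto|].
  apply infinite_sum_const_partials.
  induction n as [|n IH]; simpl in *; auto. rewrite IH. ring.
Qed.

Lemma meas_null_sub (A B : Seq -> Prop) : (forall x, A x -> B x) -> meas s f g B = 0 ->
  meas s f g A = 0.
Proof.
  intros H HB. apply Rle_antisym; [|apply meas_nonneg]. rewrite <- HB. apply meas_mono; auto.
Qed.

Lemma common_bound (Q : nat -> nat -> Prop) N :
  (forall n K K', (K <= K')%nat -> Q n K -> Q n K') ->
  (forall n, (n < N)%nat -> exists K, Q n K) -> exists K, forall n, (n < N)%nat -> Q n K.
Proof.
  intros Hm; induction N as [|N IH]; intros H.
  - exists O; intros; lia.
  - destruct IH as [K HK]; [intros; apply H; lia|].
    destruct (H N ltac:(lia)) as [K' HK'].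
    exists (Nat.max K K'). intros n Hn. destruct (Nat.eq_dec n N).
    + subst. eapply Hm; [|eauto]; lia.
    + eapply Hm; [|apply HK; lia]; lia.
Qed.

Definition first_pieces (c : nat -> option (Seq * nat)) (K : nat) : list (Seq * nat) :=
  flat_map (fun k => match c k with Some C => [C] | None => [] end) (seq 0 K).

Lemma sumL_first_pieces c K :
  sumL (first_pieces c K) (fun C => cyl_weight s f g (fst C) (snd C)) =
  fsum (fun k => piece_weight s f g (c k)) K.
Proof.
  unfold first_pieces. rewrite sumL_flat_map. apply sumL_ext. intros k.
  destruct (c k) as [[v t]|]; simpl; ring.
Qed.

Lemma in_first_pieces c K k C : (k < K)%nat -> c k = Some C -> In C (first_pieces c K).
Proof.
  intros Hk Hc. apply in_flat_map. exists k. split; [apply in_seq; lia|]. rewrite Hc; simpl; auto.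
Qed.

Lemma minimal_pieces_bound (c : nat -> nat -> option (Seq * nat)) G N :
  prefix_determined G ->
  (forall x m, G x m -> exists k j v t, c k j = Some (v, t) /\ (t <= m)%nat /\ in_cyl v t x) ->
  exists K, fsum (fun n => piece_weight s f g (minimal_piece G n)) N <=
            fsum (fun k => fsum (fun j => piece_weight s f g (c k j)) K) K.
Proof.
  intros HG Hc.
  destruct (common_bound (fun n K => forall v m, minimal_piece G n = Some (v, m) ->
      exists k j v' t, (k < K)%nat /\ (j < K)%nat /\ c k j = Some (v', t) /\ (t <= m)%nat /\
                       in_cyl v' t v) N) as [K HK].
  { intros n K K' Hle HQ v m Hv.
    destruct (HQ v m Hv) as (k & j & v' & t & Hk & Hj & H1 & H2 & H3).
    exists k, j, v', t. repeat split; auto; lia. }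
  { intros n Hn. destruct (minimal_piece G n) as [[v m]|] eqn:E; [|exists O; discriminate].
    destruct (Hc v m (minimal_piece_good G HG n v m E v (fun _ _ => eq_refl)))
      as (k & j & v' & t & H1 & H2 & H3).
    exists (S (Nat.max k j)). intros v0 m0 E0. inversion E0; subst.
    exists k, j, v', t. repeat split; auto; lia. }
  exists K.
  set (Cs := flat_map (fun k => first_pieces (c k) K) (seq 0 K)).
  replace (fsum (fun k => fsum (fun j => piece_weight s f g (c k j)) K) K)
    with (sumL Cs (fun C => cyl_weight s f g (fst C) (snd C))).
  - apply disjoint_pieces_le; [apply minimal_piece_disjoint; auto|].
    intros n v m Hn E. destruct (HK n Hn v m E) as (k & j & v' & t & Hk & Hj & Ec & Ht & Hv).
    exists (v', t). split.
    + apply in_flat_map. exists k. split; [apply in_seq; lia|]. eapply in_first_pieces; eauto.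
    + intros x Hx i Hi. simpl in *. rewrite Hx by lia. apply Hv; lia.
  - unfold Cs. rewrite sumL_flat_map. apply sumL_ext. intros k. apply sumL_first_pieces.
Qed.

End OuterMeasure.

(** * Countable unions of null sets and comparison of the two measures *)

Lemma fsum_zero N : fsum (fun _ => 0) N = 0.
Proof. induction N as [|N IH]; [reflexivity|]. rewrite fsum_S, IH; ring. Qed.

Lemma fsum_first_term F K : 0 <= F O -> (forall k, F (S k) = 0) -> fsum F K <= F O.
Proof.
  intros H0 HS. induction K as [|K IH]; [unfold fsum; simpl; lra|].
  rewrite fsum_S. destruct K as [|K]; [unfold fsum; simpl; lra|]. rewrite HS; lra.
Qed.

Lemma geometric_partial n : fsum (fun k => (/2) ^ (S k)) n = 1 - (/2) ^ n.
Proof. induction n as [|n IH]; [unfold fsum; simpl; ring|]. rewrite fsum_S, IH. simpl. field. Qed.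

Section Comparison.
Variables (f g : Strategy).

Lemma meas_approx s A e : meas s f g A < e -> exists tot, cover_sums s f g A tot /\ tot < e.
Proof.
  intros H. apply NNPP. intros Hn. apply (Rlt_not_le _ _ H). apply meas_ge_lb.
  intros tot HS. apply Rnot_lt_le. intros Hlt. apply Hn; eauto.
Qed.

(** A countable union of null sets is null: glue covers of the [k]-th set of
    weight below [d / 2^(k+1)] along minimal prefixes. *)
Lemma meas_union_null s (A : nat -> Seq -> Prop) : (forall k, meas s f g (A k) = 0) ->
  meas s f g (fun x => exists k, A k x) = 0.
Proof.
  intros HA. apply Rle_antisym; [|apply meas_nonneg].
  apply Rle_plus_epsilon. intros d Hd. rewrite Rplus_0_l.
  assert (Hpos : forall k, 0 < d * (/2) ^ (S k)) by (intros; apply Rmult_lt_0_compat, pow_lt; lra).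
  destruct (choice (fun k c => (forall x, A k x -> exists j, in_piece (c j) x) /\
     exists tot, infinite_sum (fun j => piece_weight s f g (c j)) tot /\ tot < d * (/2) ^ (S k)))
    as [cc Hcc].
  { intros k. destruct (meas_approx s (A k) (d * (/2) ^ (S k))) as [tot [[c [Hcov HS]] HSlt]].
    - rewrite HA; auto.
    - exists c; eauto. }
  set (G := fun x m => exists k j v t, cc k j = Some (v, t) /\ (t <= m)%nat /\ in_cyl v t x).
  assert (HG : prefix_determined G).
  { intros m w w' Hag (k & j & v & t & H1 & H2 & H3). exists k, j, v, t. repeat split; auto.
    intros n Hn. rewrite <- (Hag n) by lia. auto. }
  (* The glued disjoint cover has partial sums below [sum_k d / 2^(k+1) = d]. *)
  assert (Hb : forall N, fsum (fun n => piece_weight s f g (minimal_piece G n)) N <= d).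
  { intros N. destruct (minimal_pieces_bound s f g cc G N HG) as [K HK]; [auto|].
    eapply Rle_trans; [apply HK|].
    apply Rle_trans with (fsum (fun k => d * (/2) ^ (S k)) K).
    - apply fsum_le. intros k _. destruct (Hcc k) as [_ [tot [HS HSlt]]].
      pose proof (infinite_sum_partial _ _ (fun n => piece_weight_nonneg s f g (cc k n)) HS K).
      lra.
    - unfold fsum. rewrite sumL_scal. fold (fsum (fun k => (/2) ^ (S k)) K).
      rewrite geometric_partial. pose proof (pow_lt (/2) K ltac:(lra)). nra. }
  destruct (series_bounded _ d (fun n => piece_weight_nonneg s f g (minimal_piece G n)) Hb)
    as [tot [HS HSd]].
  eapply Rle_trans; [|apply HSd]. apply meas_le_cover. exists (minimal_piece G). split; auto.
  intros x [k Hx]. apply minimal_piece_cover; auto. destruct (proj1 (Hcc k) x Hx) as [j Hj].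
  destruct (cc k j) as [[v t]|] eqn:E; [|destruct Hj]. exists t, k, j, v, t. auto.
Qed.

Lemma meas_or_null s (A B : Seq -> Prop) : meas s f g A = 0 -> meas s f g B = 0 ->
  meas s f g (fun x => A x \/ B x) = 0.
Proof.
  intros HA HB. apply (meas_null_sub _ _ _ _ (fun x => exists k,
    match k with O => A x | S _ => B x end)).
  - intros x [Hx|Hx]; [exists O|exists 1%nat]; auto.
  - apply meas_union_null. intros [|k]; auto.
Qed.

Definition ev_dominated (s s' : bool) (al be : R) (x : Seq) : Prop :=
  exists N, forall m, (N <= m)%nat -> al * cyl_weight s f g x m <= be * cyl_weight s' f g x m.

(** Comparison against a single cover: the minimal prefixes that lie in the
    cover and already satisfy the domination form a cover of [Y]. *)
Lemma meas_compare_cover s s' al be (Y : Seq -> Prop) tot : 0 < al -> 0 <= be ->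
  (forall x, Y x -> ev_dominated s s' al be x) ->
  cover_sums s' f g Y tot -> al * meas s f g Y <= be * tot.
Proof.
  intros Hal Hbe HY [c [Hcov Hsum]].
  set (G := fun x m => (exists j v t, c j = Some (v, t) /\ (t <= m)%nat /\ in_cyl v t x) /\
                       al * cyl_weight s f g x m <= be * cyl_weight s' f g x m).
  assert (HG : prefix_determined G).
  { intros m w w' Hag [(j & v & t & H1 & H2 & H3) H4]. split.
    - exists j, v, t. repeat split; auto. intros n Hn. rewrite <- (Hag n) by lia. auto.
    - rewrite <- !(cw_agree f g _ w w' m Hag). auto. }
  set (row := fun k j => match k with O => c j | S _ => None end).
  assert (Hb : forall N, al * fsum (fun n => piece_weight s f g (minimal_piece G n)) N <= be * tot).
  { intros N. destruct (minimal_pieces_bound s' f g row G N HG) as [K HK].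
    { intros x m [(j & v & t & H) _]. exists O, j, v, t. exact H. }
    apply Rle_trans with (be * fsum (fun n => piece_weight s' f g (minimal_piece G n)) N).
    - unfold fsum. rewrite <- !sumL_scal. apply sumL_le. intros n.
      destruct (minimal_piece G n) as [[v m]|] eqn:E; simpl; [|lra].
      apply (minimal_piece_good G HG n v m E v (fun _ _ => eq_refl)).
    - apply Rmult_le_compat_l; auto. eapply Rle_trans; [apply HK|].
      eapply Rle_trans; [apply fsum_first_term|].
      + apply sumL_nonneg. intros; apply piece_weight_nonneg.
      + intros k. apply fsum_zero.
      + apply (infinite_sum_partial _ _ (fun n => piece_weight_nonneg s' f g (c n)) Hsum). }
  destruct (series_bounded _ (be * tot / al)
              (fun n => piece_weight_nonneg s f g (minimal_piece G n))) as [tot' [HS' HS'b]].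
  { intros N. apply (Rmult_le_reg_l al); auto. field_simplify; [apply Hb|lra]. }
  assert (meas s f g Y <= tot').
  { apply meas_le_cover. exists (minimal_piece G). split; auto.
    intros x Hx. apply minimal_piece_cover; auto. destruct (Hcov x Hx) as [j Hj].
    destruct (c j) as [[v t]|] eqn:E; [|destruct Hj]. destruct (HY x Hx) as [N HN].
    exists (Nat.max t N). split; [exists j, v, t; repeat split; auto; lia|]. apply HN; lia. }
  apply (Rmult_le_reg_r (/ al)); [apply Rinv_0_lt_compat; auto|].
  replace (al * meas s f g Y * / al) with (meas s f g Y) by (field; lra).
  unfold Rdiv in HS'b. lra.
Qed.

Lemma meas_compare s s' al be (Y : Seq -> Prop) : 0 <= al -> 0 <= be ->
  (forall x, Y x -> ev_dominated s s' al be x) ->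
  al * meas s f g Y <= be * meas s' f g Y.
Proof.
  intros Hal Hbe HY.
  destruct (Req_dec al 0) as [H0|H0].
  { subst. rewrite Rmult_0_l. apply Rmult_le_pos; auto. apply meas_nonneg. }
  assert (HC : forall tot, cover_sums s' f g Y tot -> al * meas s f g Y <= be * tot)
    by (intros; eapply meas_compare_cover; eauto; lra).
  destruct (Req_dec be 0) as [Hb0|Hb0].
  { subst. destruct (cover_exists s' f g Y) as [tot HS]. specialize (HC tot HS). lra. }
  assert (al * meas s f g Y / be <= meas s' f g Y).
  { apply meas_ge_lb. intros tot HS. apply (Rmult_le_reg_l be); [lra|].
    field_simplify; [apply HC; auto|lra]. }
  apply (Rmult_le_reg_l (/ be)); [apply Rinv_0_lt_compat; lra|].
  replace (/ be * (be * meas s' f g Y)) with (meas s' f g Y) by (field; lra).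
  unfold Rdiv in H. lra.
Qed.

End Comparison.

Lemma measurable_empty : measurable (fun _ : Seq => False).
Proof.
  apply (meas_ext (fun x => ~ in_cyl (fun _ => false) O x)).
  - intros x; split; [intros H; apply H; intros n Hn; lia|tauto].
  - apply meas_compl, meas_cyl.
Qed.

(** A set determined by the first [t] outcomes is a union of cylinders. *)
Lemma measurable_determined t (P : Seq -> Prop) : determined_by t P -> measurable P.
Proof.
  intros H. apply (meas_ext (fun x => exists k, P (decode k) /\ in_cyl (decode k) t x)).
  - intros x; split.
    + intros [k [Hk Hc]]. eapply H; [|apply Hk]. apply agree_sym; exact Hc.
    + intros Hx. destruct (code_exists t x) as [k [_ [_ Hb]]]. exists k. split.
      * eapply H; [|apply Hx]. intros n Hn. unfold decode. symmetry; auto.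
      * intros n Hn. unfold decode. rewrite Hb; auto.
  - apply meas_union. intros k. destruct (classic (P (decode k))).
    + apply (meas_ext (in_cyl (decode k) t)); [tauto|apply meas_cyl].
    + apply (meas_ext (fun _ => False)); [tauto|apply measurable_empty].
Qed.

Lemma measurable_inter A B : measurable A -> measurable B -> measurable (fun x => A x /\ B x).
Proof.
  intros HA HB.
  apply (meas_ext (fun x => ~ exists k,
    (match k with O => fun x => ~ A x | S _ => fun x => ~ B x end) x)).
  - intros x; split.
    + intros H. split; apply NNPP; intros Hn; apply H; [exists O|exists 1%nat]; auto.
    + intros [Ha Hb] [[|k] Hk]; auto.
  - apply meas_compl, meas_union. intros [|k]; apply meas_compl; auto.
Qed.

Lemma measurable_forall (A : nat -> Seq -> Prop) : (forall n, measurable (A n)) ->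
  measurable (fun x => forall n, A n x).
Proof.
  intros HA. apply (meas_ext (fun x => ~ exists n, ~ A n x)).
  - intros x; split; [intros H n; apply NNPP; intros Hn; apply H; eauto|intros H [n Hn]; auto].
  - apply meas_compl, meas_union. intros n; apply meas_compl; auto.
Qed.

Lemma Tval_agree T f g w w' n : agree n w w' -> Tval T f g w n = Tval T f g w' n.
Proof. intros H; unfold Tval; rewrite (play_agree f g w w' n H); auto. Qed.

Lemma measurable_eventually T f g (Q : R -> Prop) :
  measurable (fun x => exists N, forall n, (N <= n)%nat -> Q (Tval T f g x n)).
Proof.
  apply meas_union. intros N. apply measurable_forall. intros n. apply (measurable_determined n).
  intros w w' H Hw Hn. rewrite <- (Tval_agree T f g w w' n H); auto.
Qed.

Definition ev_le (u : nat -> R) (a : R) : Prop := exists N, forall n, (N <= n)%nat -> u n <= a.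
Definition ev_ge (u : nat -> R) (b : R) : Prop := exists N, forall n, (N <= n)%nat -> b <= u n.

Lemma ev_le_of_lim u l a : Un_cv u l -> l < a -> ev_le u a.
Proof.
  intros H Hl. destruct (H (a - l)) as [N HN]; [lra|]. exists N. intros n Hn.
  specialize (HN n Hn). unfold Rdist in HN. apply Rabs_def2 in HN. lra.
Qed.

Lemma ev_ge_of_lim u l b : Un_cv u l -> b < l -> ev_ge u b.
Proof.
  intros H Hl. destruct (H (l - b)) as [N HN]; [lra|]. exists N. intros n Hn.
  specialize (HN n Hn). unfold Rdist in HN. apply Rabs_def2 in HN. lra.
Qed.

Lemma T_lim_range T f g w l : is_test T -> has_lim T f g w l -> 0 <= l <= 1.
Proof.
  intros HT Hl. split.
  - apply (lim_ge_ev _ _ _ 1%nat Hl). intros n Hn. apply (HT n _). lia.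
  - apply (lim_le_ev _ _ _ 1%nat Hl). intros n Hn. apply (HT n _). lia.
Qed.

Section DerivativeTest.
Variables (f g : Strategy).

Lemma D_val w m : Tval Dtest f g w (S m) =
  (if Rlt_dec 0 (cyl_weight true f g w m) then
     cyl_weight true f g w m / (cyl_weight true f g w m + cyl_weight false f g w m)
   else if Rlt_dec 0 (cyl_weight false f g w m) then
     cyl_weight true f g w m / (cyl_weight true f g w m + cyl_weight false f g w m)
   else 1/2).
Proof.
  unfold Tval, Dtest. cbn [play].
  replace (firstn m (play f g w m ++ _)) with (play f g w m); [reflexivity|].
  rewrite firstn_app, play_length, Nat.sub_diag. simpl firstn. rewrite app_nil_r.
  rewrite firstn_all2; auto. rewrite play_length; lia.
Qed.

Lemma D_cross w m : Tval Dtest f g w (S m) * (cyl_weight true f g w m + cyl_weight false f g w m)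
  = cyl_weight true f g w m.
Proof.
  rewrite D_val. pose proof (cw_nonneg f g true w m). pose proof (cw_nonneg f g false w m).
  destruct (Rlt_dec _ _); [field; lra|]. destruct (Rlt_dec _ _); [field; lra|]. lra.
Qed.

Lemma D_range w n : 0 <= Tval Dtest f g w n <= 1.
Proof.
  destruct n as [|m]; [unfold Tval, Dtest; lra|].
  pose proof (D_cross w m) as H. pose proof (cw_nonneg f g true w m) as Hf.
  pose proof (cw_nonneg f g false w m) as Hg.
  destruct (Req_dec (cyl_weight true f g w m + cyl_weight false f g w m) 0) as [Hz|Hz].
  - rewrite D_val. repeat destruct (Rlt_dec _ _); lra.
  - split; nra.
Qed.

Lemma D_lim_range w l : has_lim Dtest f g w l -> 0 <= l <= 1.
Proof.
  intros Hl. split; [apply (lim_ge_ev _ _ _ O Hl)|apply (lim_le_ev _ _ _ O Hl)];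
    intros n _; apply D_range.
Qed.

Lemma ev_ge_D x b : ev_ge (Tval Dtest f g x) b -> ev_dominated f g false true b (1 - b) x.
Proof.
  intros [N HN]. exists N. intros m Hm. specialize (HN (S m) ltac:(lia)).
  pose proof (D_cross x m). pose proof (cw_nonneg f g true x m).
  pose proof (cw_nonneg f g false x m). nra.
Qed.

Lemma ev_le_D x a : ev_le (Tval Dtest f g x) a -> ev_dominated f g true false (1 - a) a x.
Proof.
  intros [N HN]. exists N. intros m Hm. specialize (HN (S m) ltac:(lia)).
  pose proof (D_cross x m). pose proof (cw_nonneg f g true x m).
  pose proof (cw_nonneg f g false x m). nra.
Qed.

End DerivativeTest.

(** * Error-free reasonable tests agree with [D] *)

Lemma lt_div_of_mul x y p q : 0 < p -> p * x < q * y -> x < q / p * y.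
Proof.
  intros Hp H. apply (Rmult_lt_reg_l p); auto.
  replace (p * (q / p * y)) with (q * y) by (field; lra). auto.
Qed.

Lemma mul_le_of_le_div x y p q : 0 < p -> x <= q / p * y -> p * x <= q * y.
Proof.
  intros Hp H. apply (Rmult_le_compat_l p) in H; [|lra].
  replace (p * (q / p * y)) with (q * y) in H by (field; lra). auto.
Qed.

Lemma squeeze_zero x y p q r t : 0 <= x -> 0 <= y -> 0 < r -> 0 <= q -> q * t < p * r ->
  (0 < x -> p * x <= q * y) -> r * y <= t * x -> x = 0 /\ y = 0.
Proof.
  intros Hx Hy Hr Hq Hc Hxy Hyx.
  assert (Hx0 : x = 0).
  { destruct (Rle_lt_or_eq_dec 0 x Hx) as [Hpos|]; auto. exfalso.
    specialize (Hxy Hpos). assert (q * (r * y) <= q * (t * x)) by (apply Rmult_le_compat_l; auto).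
    nra. }
  subst x. split; auto. nra.
Qed.

(** Points of the grid [(i+1)/(j+1) < (i+2)/(j+1)] separate any two distinct
    values in [[0, 1]]. *)
Definition grid_lo (i j : nat) : R := INR (S i) / INR (S j).
Definition grid_hi (i j : nat) : R := INR (S (S i)) / INR (S j).

Lemma grid_lo_pos i j : 0 < grid_lo i j.
Proof. unfold grid_lo. apply Rdiv_lt_0_compat; apply lt_0_INR; lia. Qed.

Lemma grid_lo_lt_hi i j : grid_lo i j < grid_hi i j.
Proof.
  unfold grid_lo, grid_hi, Rdiv. apply Rmult_lt_compat_r.
  - apply Rinv_0_lt_compat, lt_0_INR; lia.
  - apply lt_INR; lia.
Qed.

Lemma floor_ex d p : 0 < d -> 0 <= p -> exists i : nat, INR i * d <= p < INR (S i) * d.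
Proof.
  intros Hd Hp.
  assert (HM : exists M : nat, p < INR M * d).
  { destruct (archimed_cor1 (d / (p + 1))) as [M [HM HM0]]; [apply Rdiv_lt_0_compat; lra|].
    exists M. assert (0 < INR M) by (apply lt_0_INR; lia).
    apply (Rmult_lt_compat_l (INR M * (p + 1))) in HM; [|nra].
    replace (INR M * (p + 1) * / INR M) with (p + 1) in HM by (field; lra).
    replace (INR M * (p + 1) * (d / (p + 1))) with (INR M * d) in HM by (field; lra). lra. }
  destruct HM as [M HM]. induction M as [|M IH]; [simpl in HM; lra|].
  destruct (Rlt_or_le p (INR M * d)) as [H|H]; auto. exists M; split; auto.
Qed.

Lemma grid_between p q : 0 <= p -> p < q -> exists i j, p < grid_lo i j /\ grid_hi i j < q.
Proof.
  intros Hp Hpq.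
  destruct (archimed_cor1 ((q - p) / 2)) as [n [Hn Hn0]]; [lra|].
  destruct n as [|j]; [lia|].
  set (d := / INR (S j)).
  assert (Hd : 0 < d) by (apply Rinv_0_lt_compat, lt_0_INR; lia).
  destruct (floor_ex d p Hd Hp) as [i [Hi1 Hi2]].
  exists i, j. unfold grid_lo, grid_hi, Rdiv. fold d. split; [lra|].
  rewrite !S_INR. rewrite S_INR in Hi2. fold d in Hn. nra.
Qed.

Section ErrorFreeReasonable.
Variables (T : Test) (f g : Strategy).
Hypotheses (HT : is_test T) (Hre : reasonable T) (Hef : error_free T).

(** Reasonableness, used contrapositively: on a measurable set where the limit
    of [T] never exceeds [eps > 1/2], the odds [g(A) / f(A)] are not below
    [(1 - eps) / eps] ... *)
Lemma reasonable_upper A eps : measurable A -> 1/2 < eps < 1 ->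
  (forall x, A x -> ~ Lset T f g eps x) -> 0 < meas true f g A ->
  (1 - eps) * meas true f g A <= eps * meas false f g A.
Proof.
  intros HA He HL Hpos. apply Rnot_lt_le. intros Hlt.
  destruct (Hre f g A HA) as [_ HR].
  specialize (HR eps He Hpos (lt_div_of_mul _ _ eps _ ltac:(lra) Hlt)).
  rewrite meas_empty in HR; [lra|]. intros x [Hx Hl]. exact (HL x Hx Hl).
Qed.

Lemma reasonable_lower A eps : measurable A -> 0 < eps < 1/2 ->
  (forall x, A x -> ~ Defs.Rset T f g eps x) -> 0 < meas false f g A ->
  eps * meas false f g A <= (1 - eps) * meas true f g A.
Proof.
  intros HA He HR Hpos. apply Rnot_lt_le. intros Hlt.
  destruct (Hre f g A HA) as [HL _].
  specialize (HL eps He Hpos (lt_div_of_mul _ _ (1 - eps) _ ltac:(lra) Hlt)).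
  rewrite meas_empty in HL; [lra|]. intros x [Hx Hr]. exact (HR x Hx Hr).
Qed.

Lemma error_free_lower A eps : measurable A -> 0 < eps < 1/2 ->
  (1 - eps) * meas true f g (fun x => A x /\ Defs.Rset T f g eps x) <=
  eps * meas false f g (fun x => A x /\ Defs.Rset T f g eps x).
Proof.
  intros HA He. apply mul_le_of_le_div; [lra|]. exact (proj1 (Hef f g A HA) eps He).
Qed.

Lemma error_free_upper A eps : measurable A -> 1/2 < eps < 1 ->
  eps * meas false f g (fun x => A x /\ Lset T f g eps x) <=
  (1 - eps) * meas true f g (fun x => A x /\ Lset T f g eps x).
Proof.
  intros HA He. apply mul_le_of_le_div; [lra|]. exact (proj2 (Hef f g A HA) eps He).
Qed.

Lemma null_of_squeeze s (W Z : Seq -> Prop) p q r t :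
  (forall x, W x -> Z x) -> 0 < r -> 0 <= q -> q * t < p * r ->
  (0 < meas s f g Z -> p * meas s f g Z <= q * meas (negb s) f g Z) ->
  r * meas (negb s) f g Z <= t * meas s f g Z ->
  meas true f g W = 0 /\ meas false f g W = 0.
Proof.
  intros HWZ Hr Hq Hc H1 H2.
  destruct (squeeze_zero _ _ p q r t (meas_nonneg _ _ _ _) (meas_nonneg _ _ _ _) Hr Hq Hc H1 H2)
    as [H3 H4].
  destruct s; split; eapply meas_null_sub; eauto.
Qed.

Definition T_below_D (a b : R) (x : Seq) : Prop :=
  exists l l', has_lim T f g x l /\ has_lim Dtest f g x l' /\ l < a /\ b < l'.

Definition D_below_T (a b : R) (x : Seq) : Prop :=
  exists l l', has_lim T f g x l /\ has_lim Dtest f g x l' /\ l' < a /\ b < l.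

(** Where [D] eventually exceeds [b], [b g <= (1 - b) f]; the other
    inequality comes from error-freeness (if [b <= 1/2]) or from
    reasonableness (if [b > 1/2]). *)
Lemma T_below_D_null a b : 0 < a -> a < b -> b < 1 ->
  meas true f g (T_below_D a b) = 0 /\ meas false f g (T_below_D a b) = 0.
Proof.
  intros Ha Hab Hb.
  assert (HD : forall Z : Seq -> Prop, (forall x, Z x -> ev_ge (Tval Dtest f g x) b) ->
            b * meas false f g Z <= (1 - b) * meas true f g Z).
  { intros Z HZ. apply meas_compare; try lra. intros x Hx. apply ev_ge_D, HZ, Hx. }
  assert (HmD : measurable (fun x => ev_ge (Tval Dtest f g x) b))
    by exact (measurable_eventually Dtest f g (fun y => b <= y)).
  destruct (Rle_lt_dec b (1/2)) as [Hb2|Hb2].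
  - set (eps := (a + b) / 2).
    apply (null_of_squeeze true _ (fun x => ev_ge (Tval Dtest f g x) b /\ Defs.Rset T f g eps x)
             (1 - eps) eps b (1 - b)); try (unfold eps; nra).
    + intros x (l & l' & Hl & Hl' & Hla & Hbl'). split; [eapply ev_ge_of_lim; eauto|].
      exists l; split; auto. unfold eps; lra.
    + intros _. apply error_free_lower; auto. unfold eps; lra.
    + apply HD. intros x [Hx _]; exact Hx.
  - set (eps := (Rmax a (1/2) + b) / 2).
    assert (He : Rmax a (1/2) < eps < b)
      by (pose proof (Rmax_lub_lt a (1/2) b Hab Hb2); unfold eps; lra).
    pose proof (Rmax_l a (1/2)). pose proof (Rmax_r a (1/2)).
    apply (null_of_squeeze true _ (fun x => ev_ge (Tval Dtest f g x) b /\ ev_le (Tval T f g x) a)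
             (1 - eps) eps b (1 - b)); try nra.
    + intros x (l & l' & Hl & Hl' & Hla & Hbl').
      split; [eapply ev_ge_of_lim|eapply ev_le_of_lim]; eauto.
    + apply reasonable_upper; [|lra|].
      * apply measurable_inter; auto. exact (measurable_eventually T f g (fun y => y <= a)).
      * intros x [_ [N HN]] [l [Hl Hle]]. pose proof (lim_le_ev _ _ _ N Hl HN). lra.
    + apply HD. intros x [Hx _]; exact Hx.
Qed.

(** Symmetrically, where [D] eventually stays below [a], [(1 - a) f <= a g]. *)
Lemma D_below_T_null a b : 0 < a -> a < b -> b < 1 ->
  meas true f g (D_below_T a b) = 0 /\ meas false f g (D_below_T a b) = 0.
Proof.
  intros Ha Hab Hb.
  assert (HD : forall Z : Seq -> Prop, (forall x, Z x -> ev_le (Tval Dtest f g x) a) ->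
            (1 - a) * meas true f g Z <= a * meas false f g Z).
  { intros Z HZ. apply meas_compare; try lra. intros x Hx. apply ev_le_D, HZ, Hx. }
  assert (HmD : measurable (fun x => ev_le (Tval Dtest f g x) a))
    by exact (measurable_eventually Dtest f g (fun y => y <= a)).
  destruct (Rlt_le_dec a (1/2)) as [Ha2|Ha2].
  - set (eps := (a + Rmin b (1/2)) / 2).
    assert (He : a < eps < Rmin b (1/2))
      by (pose proof (Rmin_glb_lt b (1/2) a Hab Ha2); unfold eps; lra).
    pose proof (Rmin_l b (1/2)). pose proof (Rmin_r b (1/2)).
    apply (null_of_squeeze false _ (fun x => ev_le (Tval Dtest f g x) a /\ ev_ge (Tval T f g x) b)
             eps (1 - eps) (1 - a) a); try nra.
    + intros x (l & l' & Hl & Hl' & Hla & Hbl').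
      split; [eapply ev_le_of_lim|eapply ev_ge_of_lim]; eauto.
    + apply reasonable_lower; [|lra|].
      * apply measurable_inter; auto. exact (measurable_eventually T f g (fun y => b <= y)).
      * intros x [_ [N HN]] [l [Hl Hle]]. pose proof (lim_ge_ev _ _ _ N Hl HN). lra.
    + apply HD. intros x [Hx _]; exact Hx.
  - set (eps := (a + b) / 2).
    apply (null_of_squeeze false _ (fun x => ev_le (Tval Dtest f g x) a /\ Lset T f g eps x)
             eps (1 - eps) (1 - a) a); try (unfold eps; nra).
    + intros x (l & l' & Hl & Hl' & Hla & Hbl'). split; [eapply ev_le_of_lim; eauto|].
      exists l; split; auto. unfold eps; lra.
    + intros _. apply error_free_upper; auto. unfold eps; lra.
    + apply HD. intros x [Hx _]; exact Hx.
Qed.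

(** The points of grid cell [(i, j)] where the two limits are separated by
    the cell; cells reaching [1] are irrelevant since both limits lie in
    [[0, 1]]. *)
Definition separated_in_cell (i j : nat) (x : Seq) : Prop :=
  grid_hi i j < 1 /\
  (T_below_D (grid_lo i j) (grid_hi i j) x \/ D_below_T (grid_lo i j) (grid_hi i j) x).

Lemma separated_in_cell_null s i j : meas s f g (separated_in_cell i j) = 0.
Proof.
  destruct (Rlt_le_dec (grid_hi i j) 1) as [Hb|Hb].
  - pose proof (grid_lo_pos i j) as Ha. pose proof (grid_lo_lt_hi i j) as Hab.
    apply (meas_null_sub _ _ _ _ (fun x => T_below_D (grid_lo i j) (grid_hi i j) x \/
                                           D_below_T (grid_lo i j) (grid_hi i j) x)).
    + intros x [_ Hx]; exact Hx.
    + destruct (T_below_D_null _ _ Ha Hab Hb), (D_below_T_null _ _ Ha Hab Hb).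
      apply meas_or_null; destruct s; auto.
  - apply meas_empty. intros x [Hx _]; lra.
Qed.

Lemma disagreement_in_grid x :
  (exists l l', has_lim T f g x l /\ has_lim Dtest f g x l' /\ l <> l') ->
  exists i j, separated_in_cell i j x.
Proof.
  intros (l & l' & Hl & Hl' & Hne).
  pose proof (T_lim_range T f g x l HT Hl). pose proof (D_lim_range f g x l' Hl').
  destruct (Rlt_or_le l l') as [Hlt|Hle].
  - destruct (grid_between l l') as (i & j & H1 & H2); try lra.
    exists i, j. split; [lra|]. left. exists l, l'. auto.
  - destruct (grid_between l' l) as (i & j & H1 & H2); try lra.
    exists i, j. split; [lra|]. right. exists l, l'. repeat split; auto; lra.
Qed.

Theorem error_free_agrees_with_D : equiv_pair T Dtest f g.
Proof.
  unfold equiv_pair; cbv zeta.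
  split; (eapply meas_null_sub; [exact disagreement_in_grid|]);
    apply meas_union_null; intros i; apply meas_union_null; intros j;
    apply separated_in_cell_null.
Qed.

End ErrorFreeReasonable.

Theorem mainTheorem7 (T : Test) (HT : is_test T) (Han : anonymous T)
  (Hre : reasonable T) (Hne : ~ equiv T Dtest) : ~ error_free T.
Proof.
  intros Hef. apply Hne. intros f g. apply error_free_agrees_with_D; auto.
Qed.
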